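(* For every odd prime $p$, writing $m = \frac{p-1}{2}$, $$\sum_{\substack{k_1,k_2,k_3,k_4=0\\ k_1+k_2+k_3+k_4 = p-1}}^{m}\ \prod_{i=1}^4 \binom{m}{k_i}\binom{m+k_i}{k_i} \equiv \sum_{\substack{k_1,k_2,k_3,k_4=0\\ k_1+k_2 = k_3+k_4}}^{m}\ \prod_{i=1}^4 \binom{m}{k_i}\binom{m+k_i}{k_i} \pmod{p^2}.$$
   Context: Both sums run over integers $0 \le k_i \le m$ subject to the indicated linear constraint. *)

From mathcomp Require Import all_boot.
Set Implicit Arguments. Unset Strict Implicit. Unset Printing Implicit Defensive.

Definition aterm (m k : nat) : nat := 'C(m, k) * 'C(m + k, k).

Definition prod4 (m k1 k2 k3 k4 : nat) : nat :=
  aterm m k1 * aterm m k2 * aterm m k3 * aterm m k4.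

From mathcomp Require Import all_boot all_algebra.
From mathcomp Require Import zify ring.
Import GRing.Theory.

(* Grouping the indices by n = k1 + k2, and writing c n for the
   autoconvolution of a_m, the two sides become sum_n c n c (2m - n) and
   sum_n c n ^ 2.  Since p = 2m + 1, upper negation gives
   a_m(k) = (-1)^m a_m(m - k) mod p, hence c n = c (2m - n) mod p.  So
   2 (sum_n c n ^ 2 - sum_n c n c (2m - n)) = sum_n (c n - c (2m - n)) ^ 2
   is divisible by p ^ 2, and p is odd. *)

Definition autoconv (m : nat) (f : nat -> nat) (n : nat) : nat :=
  \sum_(k1 < m.+1) \sum_(k2 < m.+1) (if k1 + k2 == n then f k1 * f k2 else 0).

Lemma sum_mul_autoconv m (f g : nat -> nat) :
  \sum_(k1 < m.+1) \sum_(k2 < m.+1) f k1 * f k2 * g (k1 + k2)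
  = \sum_(n < m.*2.+1) autoconv m f n * g n.
Proof.
symmetry; transitivity (\sum_(n < m.*2.+1) \sum_(k1 < m.+1) \sum_(k2 < m.+1)
   (if k1 + k2 == n then f k1 * f k2 * g (k1 + k2) else 0)).
  apply: eq_bigr => n _; rewrite big_distrl; apply: eq_bigr => k1 _.
  rewrite big_distrl; apply: eq_bigr => k2 _ /=.
  by case: eqP => [->|]; rewrite ?mul0n.
rewrite exchange_big; apply: eq_bigr => k1 _; rewrite exchange_big.
apply: eq_bigr => k2 _ /=.
have lt_k12 : k1 + k2 < m.*2.+1 by have := ltn_ord k1; have := ltn_ord k2; lia.
rewrite (bigD1 (Ordinal lt_k12)) //= eqxx big1 ?addn0 // => n /eqP ne_n.
by case: eqP => // e_n; case: ne_n; apply: val_inj.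
Qed.

Lemma sum_quad_autoconv m (f h : nat -> nat) :
  \sum_(k1 < m.+1) \sum_(k2 < m.+1) \sum_(k3 < m.+1) \sum_(k4 < m.+1)
     (if k3 + k4 == h (k1 + k2) then f k1 * f k2 * f k3 * f k4 else 0)
  = \sum_(n < m.*2.+1) autoconv m f n * autoconv m f (h n).
Proof.
rewrite -(sum_mul_autoconv m f (fun n => autoconv m f (h n))).
apply: eq_bigr => k1 _; apply: eq_bigr => k2 _.
rewrite /autoconv big_distrr; apply: eq_bigr => k3 _.
rewrite big_distrr; apply: eq_bigr => k4 _ /=.
by case: eqP; rewrite ?muln0 ?mulnA.
Qed.

Section Reflection.
Local Open Scope ring_scope.

Lemma autoconv_reflect (R : comPzRingType) m (f : nat -> nat) (s : R) :
    s * s = 1 -> (forall k, (k <= m)%N -> (f k)%:R = s * (f (m - k)%N)%:R) ->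
  forall n, (n <= m.*2)%N -> (autoconv m f n)%:R = (autoconv m f (m.*2 - n))%:R :> R.
Proof.
move=> s2 f_refl n le_n; rewrite /autoconv !natr_sum.
rewrite [RHS](reindex_inj rev_ord_inj); apply: eq_bigr => k1 _.
rewrite !natr_sum [RHS](reindex_inj rev_ord_inj); apply: eq_bigr => k2 _ /=.
have lt_k1 := ltn_ord k1; have lt_k2 := ltn_ord k2; rewrite !subSS.
have -> : (m - k1 + (m - k2) == m.*2 - n)%N = (k1 + k2 == n)%N.
  by apply/eqP/eqP; lia.
case: eqP => // _; rewrite !natrM (f_refl k1 lt_k1) (f_refl k2 lt_k2).
by rewrite mulrACA s2 mul1r.
Qed.

End Reflection.

Section PrimeField.
Local Open Scope ring_scope.
Variables (p : nat) (p_pr : prime p).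

Lemma coprime_fact r : (r < p)%N -> coprime p r`!.
Proof.
elim: r => [|r IHr] lt_r_p; first by rewrite fact0 coprimen1.
rewrite factS coprimeMr IHr 1?ltnW // andbT prime_coprime //.
by rewrite gtnNdvd.
Qed.

(* In ['F_p], [p.-1 - j] equals [-(j + 1)]: these are instances of upper negation. *)
Lemma ffact_negFp j r : (j + r < p)%N ->
  ((p.-1 - j) ^_ r)%:R = (-1) ^+ r * ((j + r) ^_ r)%:R :> 'F_p.
Proof.
elim: r => [|r IHr] lt_jr_p; first by rewrite !ffactn0 mul1r.
rewrite ffactnSr addnS ffactSS !natrM IHr; last lia.
have -> : (p.-1 - j - r)%:R = - (j + r).+1%:R :> 'F_p.
  apply/eqP; rewrite -subr_eq0 opprK -natrD.
  have -> : (p.-1 - j - r + (j + r).+1 = p)%N by have := prime_gt1 p_pr; lia.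
  by rewrite pchar_Fp_0.
by rewrite exprS; ring.
Qed.

Lemma bin_negFp j r : (j + r < p)%N ->
  'C(p.-1 - j, r)%:R = (-1) ^+ r * 'C(j + r, r)%:R :> 'F_p.
Proof.
move=> lt_jr_p.
have fact_unit : r`!%:R \is a @GRing.unit 'F_p.
  by rewrite unitFpE // coprime_fact //; lia.
apply: (mulIr fact_unit); rewrite -mulrA -!natrM !bin_ffact.
exact: ffact_negFp.
Qed.

Lemma aterm_reflectFp m k : p = m.*2.+1 -> (k <= m)%N ->
  (aterm m k)%:R = (-1) ^+ m * (aterm m (m - k))%:R :> 'F_p.
Proof.
move=> p_eq le_k_m; rewrite /aterm bin_sub // !natrM.
have -> : 'C(m + k, k) = 'C(p.-1 - (m - k), m).
  by rewrite -(bin_sub (leq_addl m k)) addnK; congr 'C(_, _); lia.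
rewrite bin_negFp; last lia.
rewrite -(bin_sub (leq_addl m (m - k))) addnK addnC; ring.
Qed.

End PrimeField.

Section SquareSums.
Local Open Scope ring_scope.

Lemma sum_sqr_sub_rev (R : comPzRingType) N (c : nat -> R) :
  \sum_(n < N.+1) (c n - c (N - n)%N) ^+ 2
  = 2 * (\sum_(n < N.+1) c n ^+ 2 - \sum_(n < N.+1) c n * c (N - n)%N).
Proof.
have rev_sqr : \sum_(n < N.+1) c (N - n)%N ^+ 2 = \sum_(n < N.+1) c n ^+ 2.
  rewrite [RHS](reindex_inj rev_ord_inj); apply: eq_bigr => n _ /=.
  by rewrite subSS.
under eq_bigr => n _ do rewrite sqrrB.
by rewrite !big_split /= sumrN sumrMnl rev_sqr; ring.
Qed.

Lemma dvdz_subn_mod (d a b : nat) : a = b %[mod d] -> (d%:Z %| a%:Z - b%:Z)%Z.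
Proof. by move=> e_mod; rewrite -eqz_mod_dvd; apply/eqP; rewrite !modz_nat e_mod. Qed.

Lemma sum_mul_rev_sqr_mod (p N : nat) (c : nat -> nat) : coprime p 2 ->
    (forall n, (n <= N)%N -> c n = c (N - n)%N %[mod p]) ->
  (\sum_(n < N.+1) c n * c (N - n) = \sum_(n < N.+1) c n ^ 2 %[mod p ^ 2])%N.
Proof.
move=> p_coprime2 c_refl.
have sq_dvd : (p%:Z ^+ 2 %| 2 * ((\sum_(n < N.+1) c n ^ 2)%N%:Z
                                  - (\sum_(n < N.+1) c n * c (N - n))%N%:Z))%Z.
  rewrite -!natz !natr_sum.
  under eq_bigr => n _ do rewrite natrX.
  under [X in _ - X]eq_bigr => n _ do rewrite natrM.
  rewrite -(@sum_sqr_sub_rev _ N (fun n => (c n)%:R)).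
  apply: rpred_sum => n _.
  by rewrite !natz dvdz_exp2r // dvdz_subn_mod // (c_refl n (ltn_ord n)).
have sq_coprime2 : coprimez (p%:Z ^+ 2) 2 by rewrite coprimezE abszX coprimeXl.
move: sq_dvd; rewrite Gauss_dvdzr // expr2 -PoszM -eqz_mod_dvd.
by rewrite !modz_nat eqz_nat eq_sym => /eqP.
Qed.

End SquareSums.

Theorem lemma2p11 (p : nat) (hp : prime p) (hodd : odd p) :
  let m := (p - 1) %/ 2 in
  \sum_(k1 < m.+1) \sum_(k2 < m.+1) \sum_(k3 < m.+1) \sum_(k4 < m.+1)
     (if k1 + k2 + k3 + k4 == p - 1 then prod4 m k1 k2 k3 k4 else 0)
  = \sum_(k1 < m.+1) \sum_(k2 < m.+1) \sum_(k3 < m.+1) \sum_(k4 < m.+1)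
     (if k1 + k2 == k3 + k4 then prod4 m k1 k2 k3 k4 else 0)
  %[mod p ^ 2].
Proof.
move=> m; set c := autoconv m (aterm m).
have p_eq : p = m.*2.+1 by have := modn2 p; rewrite hodd /m; lia.
have -> : \sum_(k1 < m.+1) \sum_(k2 < m.+1) \sum_(k3 < m.+1) \sum_(k4 < m.+1)
            (if k1 + k2 + k3 + k4 == p - 1 then prod4 m k1 k2 k3 k4 else 0)
          = \sum_(n < m.*2.+1) c n * c (m.*2 - n).
  rewrite -sum_quad_autoconv; apply: eq_bigr => k1 _; apply: eq_bigr => k2 _.
  apply: eq_bigr => k3 _; apply: eq_bigr => k4 _.
  have := ltn_ord k1; have := ltn_ord k2; case: eqP; case: eqP => //; lia.
have -> : \sum_(k1 < m.+1) \sum_(k2 < m.+1) \sum_(k3 < m.+1) \sum_(k4 < m.+1)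
            (if k1 + k2 == k3 + k4 then prod4 m k1 k2 k3 k4 else 0)
          = \sum_(n < m.*2.+1) c n ^ 2.
  rewrite -(sum_quad_autoconv m (aterm m) id); apply: eq_bigr => k1 _.
  apply: eq_bigr => k2 _; apply: eq_bigr => k3 _; apply: eq_bigr => k4 _.
  by rewrite eq_sym.
apply: sum_mul_rev_sqr_mod; first by rewrite coprimen2.
move=> n le_n; rewrite -!(val_Fp_nat hp); congr val.
apply: (@autoconv_reflect _ m (aterm m) ((-1 : 'F_p) ^+ m)%R) => // [|k].
  by rewrite -exprMn mulrNN mulr1 expr1n.
exact: aterm_reflectFp.
Qed.
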